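(* Consider matrices $F_k,C_k\in\mathbb R^{m\times n}$, $H_k\in\mathbb R^{p\times n}$, positive definite symmetric $S_k\in\mathbb R^{m\times m}$, $R_k\in\mathbb R^{p\times p}$, and observations $y_k\in\mathbb R^p$, $k=0,1,2,\dots$, for the descriptor system $F_{k+1}x_{k+1}-C_kx_k=f_{k+1}$, $F_0x_0=f_0$, $y_k=H_kx_k+g_k$ with uncertainty set (for each horizon $\tau$) $\langle S_0f_0,f_0\rangle+\sum_{i=1}^{\tau}\langle S_{i-1}f_i,f_i\rangle+\sum_{i=0}^{\tau}\langle R_ig_i,g_i\rangle\le1$. Let $P_k,r_k,B_k$ be defined by $P_0=F_0'S_0F_0+H_0'R_0H_0$, $r_0=H_0'R_0y_0$, $B_k=P_k+C_k'S_kC_k$, and for $k\ge1$ $P_k=H_k'R_kH_k+F_k'[S_{k-1}-S_{k-1}C_{k-1}B_{k-1}^+C_{k-1}'S_{k-1}]F_k$, $r_k=F_k'S_{k-1}C_{k-1}B_{k-1}^+r_{k-1}+H_k'R_ky_k$. Let $\hat x_{k|k}$, $P_{k|k}$, $A_k$ be defined by $P_{0|0}^{-1}=F_0'S_0F_0+H_0'R_0H_0$, $\hat x_{0|0}=P_{0|0}H_0'R_0y_0$, $A_k^{-1}=S_k^{-1}+C_kP_{k|k}C_k'$, and for $k\ge1$ $P_{k|k}^{-1}=F_k'A_{k-1}F_k+H_k'R_kH_k$, $\hat x_{k|k}=P_{k|k}F_k'A_{k-1}C_{k-1}\hat x_{k-1|k-1}+P_{k|k}H_k'R_ky_k$. If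 $\mathrm{rank}\begin{bmatrix}F_k\\H_k\end{bmatrix}=n$ for all $k$, then for all $k$ the index of non-causality satisfies $I_k=0$ and $P_k^+r_k=\hat x_{k|k}$.
   Context: $A'$ denotes transpose and $A^+$ the Moore–Penrose pseudoinverse. For horizon $k$, let $X(k)$ be the set of states $x_k$ for which there exist $x_0,\dots,x_{k-1}$ such that the residuals $f_0=F_0x_0$, $f_{j+1}=F_{j+1}x_{j+1}-C_jx_j$, $g_j=y_j-H_jx_j$ ($j\le k$) satisfy the uncertainty constraint with $\tau=k$. The $\ell$-error is $\hat\rho(\ell,k):=\inf_{z\in X(k)}\sup_{x\in X(k)}|\langle\ell,x-z\rangle|$, the minimax observable subspace is $\mathcal L(k):=\{\ell\in\mathbb R^n:\hat\rho(\ell,k)<\infty\}$, and the index of non-causality is $I_k:=n-\dim\mathcal L(k)$. The observations $y_k$ are assumed generated by some trajectory whose inputs and noises satisfy the uncertainty constraint. *)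

From Stdlib Require ClassicalEpsilon.
From HB Require Import structures.
From mathcomp Require Import all_boot all_order all_algebra.
From mathcomp Require Import boolp classical_sets reals constructive_ereal ereal.
Set Implicit Arguments. Unset Strict Implicit. Unset Printing Implicit Defensive.
Import Order.TTheory GRing.Theory Num.Theory.
Local Open Scope ring_scope.
Local Open Scope classical_set_scope.

Section Defs.
Variable R : realType.

Definition dotv (q : nat) (u v : 'cV[R]_q) : R := (u^T *m v) 0 0.

(* Moore--Penrose pseudoinverse: the (unique) matrix satisfying the four
   Penrose conditions (it exists over any real field). *)
Definition is_mp_pinv (a b : nat) (A : 'M[R]_(a, b)) (X : 'M[R]_(b, a)) : bool :=
  [&& A *m X *m A == A, X *m A *m X == X,
      (A *m X)^T == A *m X & (X *m A)^T == X *m A].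

Definition mp_pinv (a b : nat) (A : 'M[R]_(a, b)) : 'M[R]_(b, a) :=
  ClassicalEpsilon.epsilon (inhabits 0) (fun X => is_mp_pinv A X).

Definition posdef_sym (q : nat) (M : 'M[R]_q) : Prop :=
  M^T = M /\ forall v : 'cV[R]_q, v != 0 -> 0 < dotv v (M *m v).

Variables (m n p : nat).
Variables (F C : nat -> 'M[R]_(m, n)) (H : nat -> 'M[R]_(p, n))
          (S : nat -> 'M[R]_m) (Rw : nat -> 'M[R]_p) (y : nat -> 'cV[R]_p).

Definition cost (tau : nat) (x : nat -> 'cV[R]_n) : R :=
  let f0 := F 0 *m x 0 in
  dotv (S 0 *m f0) f0
  + \sum_(1 <= i < tau.+1)
      dotv (S i.-1 *m (F i *m x i - C i.-1 *m x i.-1))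
           (F i *m x i - C i.-1 *m x i.-1)
  + \sum_(0 <= i < tau.+1)
      dotv (Rw i *m (y i - H i *m x i)) (y i - H i *m x i).

Definition Xset (k : nat) : set 'cV[R]_n :=
  [set z | exists x : nat -> 'cV[R]_n, x k = z /\ cost k x <= 1].

Definition lerror (l : 'cV[R]_n) (k : nat) : \bar R :=
  ereal_inf [set ereal_sup [set (`|dotv l (x - z)|)%:E | x in Xset k]
            | z in Xset k].

Definition Lsub (k : nat) : set 'cV[R]_n :=
  [set l | (lerror l k < +oo)%E].

Definition setdim (A : set 'cV[R]_n) : nat :=
  \max_(d < n.+1 | `[< exists M : 'M[R]_(d, n),
                        (forall i, A (row i M)^T) /\ row_free M >]) d.

Definition Inc (k : nat) : nat := (n - setdim (Lsub k))%N.

Fixpoint Pr (k : nat) : 'M[R]_n * 'cV[R]_n :=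
  match k with
  | 0 => ((F 0)^T *m S 0 *m F 0 + (H 0)^T *m Rw 0 *m H 0,
          (H 0)^T *m Rw 0 *m y 0)
  | j.+1 =>
      let Pj := (Pr j).1 in let rj := (Pr j).2 in
      let Bj := Pj + (C j)^T *m S j *m C j in
      let Bp := mp_pinv Bj in
      ((H j.+1)^T *m Rw j.+1 *m H j.+1
         + (F j.+1)^T *m (S j - S j *m C j *m Bp *m (C j)^T *m S j) *m F j.+1,
       (F j.+1)^T *m S j *m C j *m Bp *m rj + (H j.+1)^T *m Rw j.+1 *m y j.+1)
  end.

Definition Pk (k : nat) := (Pr k).1.
Definition rk (k : nat) := (Pr k).2.
Definition Bk (k : nat) := Pk k + (C k)^T *m S k *m C k.

Fixpoint KF (k : nat) : 'M[R]_n * 'cV[R]_n :=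
  match k with
  | 0 => let P00 := invmx ((F 0)^T *m S 0 *m F 0 + (H 0)^T *m Rw 0 *m H 0) in
         (P00, P00 *m (H 0)^T *m Rw 0 *m y 0)
  | j.+1 =>
      let Pjj := (KF j).1 in let xj := (KF j).2 in
      let Aj := invmx (invmx (S j) + C j *m Pjj *m (C j)^T) in
      let P' := invmx ((F j.+1)^T *m Aj *m F j.+1
                       + (H j.+1)^T *m Rw j.+1 *m H j.+1) in
      (P', P' *m (F j.+1)^T *m Aj *m C j *m xj
           + P' *m (H j.+1)^T *m Rw j.+1 *m y j.+1)
  end.

Definition Pkk (k : nat) := (KF k).1.
Definition xhat (k : nat) := (KF k).2.
Definition Ak (k : nat) := invmx (invmx (S k) + C k *m Pkk k *m (C k)^T).

End Defs.

(* The information matrices P_k are positive definite: P_0 is a Gram matrix of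
   the full-column-rank stack [F_0; H_0], and by the Woodbury identity
   S - S C B^{-1} C' S = (S^{-1} + C P^{-1} C')^{-1} the bracket in the
   recursion for P_{k+1} is the positive definite matrix A_k, so P_{k+1} is
   again such a Gram matrix.  Hence all pseudoinverses are inverses,
   P_{k|k} = P_k^{-1}, and the same identity in the form A_k C_k = S_k C_k B_k^{-1} P_k
   shows inductively that r_k = P_k xhat_{k|k}.
   For I_k = 0, the rank condition writes <l, x_k> as <a, F_k x_k> + <b, H_k x_k>.
   The second term differs from <b, y_k> by a measurement residual, and
   F_k x_k differs from C_{k-1} x_{k-1} by a dynamics residual; all residuals are
   bounded on X(k) by the uncertainty constraint, so by induction on k every
   functional is bounded on X(k) and has finite error. *)

From Pilot Require Import Defs.
From HB Require Import structures.
From mathcomp Require Import all_boot all_order all_algebra.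
From mathcomp Require Import boolp classical_sets reals constructive_ereal ereal.
From mathcomp Require Import lra.
From Stdlib Require ClassicalEpsilon.
Set Implicit Arguments. Unset Strict Implicit.
Import Order.TTheory GRing.Theory Num.Theory.
Local Open Scope ring_scope.

Section FullColumnRank.
Variables (K : fieldType) (q1 q2 q : nat) (F : 'M[K]_(q1, q)) (H : 'M[K]_(q2, q)).
Hypothesis rank_FH : \rank (col_mx F H) = q.

Lemma col_mx_full_rank_eq0 (v : 'cV_q) : F *m v = 0 -> H *m v = 0 -> v = 0.
Proof.
move=> Fv0 Hv0.
have free_FHt : row_free (col_mx F H)^T by rewrite /row_free mxrank_tr rank_FH.
apply/eqP; rewrite -trmx_eq0 -(mulmx_free_eq0 _ free_FHt) -trmx_mul mul_col_mx Fv0 Hv0.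
by rewrite col_mx0 trmx0.
Qed.

Lemma col_mx_full_rank_span (l : 'cV_q) : exists a b, l = F^T *m a + H^T *m b.
Proof.
have /submxP[D lD] : (l^T <= col_mx F H)%MS.
  by apply: submx_full; rewrite /row_full rank_FH.
exists (lsubmx D)^T, (rsubmx D)^T.
apply: trmx_inj; rewrite lD -[D]hsubmxK mul_row_col row_mxKl row_mxKr linearD /=.
by rewrite !trmx_mul !trmxK.
Qed.

End FullColumnRank.

Section Woodbury.
Variables (K : comUnitRingType) (q r : nat) (S : 'M[K]_q) (C : 'M[K]_(q, r)) (P : 'M[K]_r).
Let B := P + C^T *m S *m C.
Hypothesis B_unit : B \in unitmx.

Lemma woodbury_mulmx :
  (S - S *m C *m invmx B *m C^T *m S) *m C = S *m C *m invmx B *m P.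
Proof.
have CSC : C^T *m S *m C = B - P by rewrite /B addrC addKr.
rewrite mulmxBl -!mulmxA [C^T *m (S *m C)]mulmxA CSC !mulmxA mulmxBr.
by rewrite -!mulmxA mulVmx // mulmx1 !mulmxA subKr.
Qed.

Lemma woodbury : S \in unitmx -> P \in unitmx ->
  invmx (invmx S + C *m invmx P *m C^T) = S - S *m C *m invmx B *m C^T *m S.
Proof.
move=> S_unit P_unit; set W := S - _.
have CSC : C^T *m S *m C = B - P by rewrite /B addrC addKr.
have CPCSC : C *m invmx P *m C^T *m S *m C *m invmx B = C *m invmx P - C *m invmx B.
  have -> : C *m invmx P *m C^T *m S *m C = C *m invmx P *m (C^T *m S *m C).
    by rewrite !mulmxA.
  by rewrite CSC mulmxBr mulmxBl -(mulmxA _ B) mulmxV // mulmx1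
    -(mulmxA C _ P) mulVmx // mulmx1.
have inverse_W : (invmx S + C *m invmx P *m C^T) *m W = 1%:M.
  rewrite /W mulmxDl !mulmxBr !mulmxA mulVmx // !mul1mx CPCSC.
  by rewrite !mulmxBl subKr subrK.
have [unit_lhs _] := mulmx1_unit inverse_W.
by rewrite -[LHS]mulmx1 -inverse_W mulmxA mulVmx // mul1mx.
Qed.

End Woodbury.

Section BoundedOn.
Variables (K : numDomainType) (T : Type) (A : T -> Prop).

Definition bounded_on (g : T -> K) := exists M, forall x, A x -> `|g x| <= M.

Lemma bounded_on_cst c : bounded_on (fun=> c).
Proof. by exists `|c|. Qed.

Lemma bounded_onN g : bounded_on g -> bounded_on (fun x => - g x).
Proof. by move=> [M gM]; exists M => x Ax; rewrite normrN gM. Qed.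

Lemma bounded_onD g h :
  bounded_on g -> bounded_on h -> bounded_on (fun x => g x + h x).
Proof.
move=> [M gM] [N hN]; exists (M + N) => x Ax.
by rewrite (le_trans (ler_normD _ _)) // lerD ?gM ?hN.
Qed.

Lemma eq_bounded_on g h :
  (forall x, A x -> g x = h x) -> bounded_on g -> bounded_on h.
Proof. by move=> gh [M gM]; exists M => x Ax; rewrite -gh ?gM. Qed.

End BoundedOn.

Lemma ler_sum_nat_term (K : numDomainType) (a b i : nat) (f : nat -> K) :
  (forall j, 0 <= f j) -> (a <= i < b)%N -> f i <= \sum_(a <= j < b) f j.
Proof.
move=> f_ge0 ai_b; rewrite (bigD1_seq i) ?mem_index_iota //=; last first.
  by rewrite /index_iota iota_uniq.
by rewrite lerDl sumr_ge0.
Qed.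

Section QuadraticForms.
Variable R : realType.
Implicit Types q r : nat.

Lemma dotvC q (u v : 'cV[R]_q) : dotv u v = dotv v u.
Proof. by rewrite /dotv -[u^T *m v]trmxK trmx_mul trmxK mxE. Qed.

Lemma dotv_trmul q r (M : 'M[R]_(q, r)) u v : dotv u (M *m v) = dotv (M^T *m u) v.
Proof. by rewrite /dotv trmx_mul trmxK mulmxA. Qed.

Lemma dotvDl q (u v w : 'cV[R]_q) : dotv (u + v) w = dotv u w + dotv v w.
Proof. by rewrite /dotv linearD mulmxDl mxE. Qed.

Lemma dotvDr q (u v w : 'cV[R]_q) : dotv u (v + w) = dotv u v + dotv u w.
Proof. by rewrite /dotv mulmxDr mxE. Qed.

Lemma dotvNl q (u v : 'cV[R]_q) : dotv (- u) v = - dotv u v.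
Proof. by rewrite /dotv linearN mulNmx mxE. Qed.

Lemma dotvBr q (u v w : 'cV[R]_q) : dotv u (v - w) = dotv u v - dotv u w.
Proof. by rewrite /dotv mulmxBr mxE !mxE. Qed.

Lemma dotv0r q (u : 'cV[R]_q) : dotv u 0 = 0.
Proof. by rewrite /dotv mulmx0 mxE. Qed.

Lemma dotv_mulmx_sym q (M : 'M[R]_q) u v : M^T = M -> dotv (M *m u) v = dotv u (M *m v).
Proof. by move=> sM; rewrite dotv_trmul sM. Qed.

Lemma dotv_sym_mulmx q (M : 'M[R]_q) u v : M^T = M -> dotv u (M *m v) = dotv v (M *m u).
Proof. by move=> sM; rewrite -dotv_mulmx_sym // dotvC. Qed.

Lemma dotv_conj q r (C : 'M[R]_(q, r)) (M : 'M[R]_q) v :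
  dotv v (C^T *m M *m C *m v) = dotv (C *m v) (M *m (C *m v)).
Proof. by rewrite -!mulmxA dotv_trmul trmxK. Qed.

Definition psd_sym q (M : 'M[R]_q) : Prop :=
  M^T = M /\ forall v : 'cV[R]_q, 0 <= dotv v (M *m v).

Lemma posdef_sym_psd q (M : 'M[R]_q) : posdef_sym M -> psd_sym M.
Proof.
move=> [sM pM]; split => // v; have [->|nz] := eqVneq v 0.
  by rewrite mulmx0 dotv0r.
exact/ltW/pM.
Qed.

Lemma psd_sym_conj q r (C : 'M[R]_(q, r)) (M : 'M[R]_q) :
  psd_sym M -> psd_sym (C^T *m M *m C).
Proof.
move=> [sM pM]; split; first by rewrite !trmx_mul trmxK sM mulmxA.
by move=> v; rewrite dotv_conj.
Qed.

Lemma posdef_sym_addr q (M N : 'M[R]_q) :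
  posdef_sym M -> psd_sym N -> posdef_sym (M + N).
Proof.
move=> [sM pM] [sN pN]; split; first by rewrite linearD /= sM sN.
by move=> v nz; rewrite mulmxDl dotvDr ltr_wpDr ?pM.
Qed.

Lemma posdef_sym_unit q (M : 'M[R]_q) : posdef_sym M -> M \in unitmx.
Proof.
move=> [sM pM]; rewrite -row_free_unit -kermx_eq0; apply/eqP/row_matrixP => i.
rewrite row0; set w := row i _.
have Mw0 : M *m w^T = 0 by rewrite -sM -trmx_mul /w -row_mul mulmx_ker row0 trmx0.
have [/eqP|nz] := eqVneq w^T 0; first by rewrite trmx_eq0 => /eqP.
by move: (pM _ nz); rewrite Mw0 dotv0r ltxx.
Qed.

Lemma posdef_sym_inv q (M : 'M[R]_q) : posdef_sym M -> posdef_sym (invmx M).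
Proof.
move=> pdM; have [sM pM] := pdM; have M_unit := posdef_sym_unit pdM.
split; first by rewrite trmx_inv sM.
move=> v nz; set w := invmx M *m v.
have vE : v = M *m w by rewrite /w mulmxA mulmxV // mul1mx.
have nzw : w != 0 by apply: contraNneq nz => w0; rewrite vE w0 mulmx0.
by rewrite {1}vE dotv_mulmx_sym // pM.
Qed.

Lemma posdef_sym_gram_col_mx q1 q2 q (F : 'M[R]_(q1, q)) (H : 'M[R]_(q2, q))
    (M : 'M[R]_q1) (N : 'M[R]_q2) :
  \rank (col_mx F H) = q -> posdef_sym M -> posdef_sym N ->
  posdef_sym (F^T *m M *m F + H^T *m N *m H).
Proof.
move=> rank_FH pdM pdN.
have [sF psdF] := psd_sym_conj F (posdef_sym_psd pdM).
have [sH psdH] := psd_sym_conj H (posdef_sym_psd pdN).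
split=> [|v nz]; first by rewrite linearD /= sF sH.
rewrite mulmxDl dotvDr; have [Fv0|nzFv] := eqVneq (F *m v) 0.
  have [Hv0|nzHv] := eqVneq (H *m v) 0.
    by move: nz; rewrite (col_mx_full_rank_eq0 rank_FH Fv0 Hv0) eqxx.
  by rewrite ltr_wpDl // dotv_conj pdN.2.
by rewrite ltr_wpDr // dotv_conj pdM.2.
Qed.

Lemma psd_sym_norm_dotv_le q (M : 'M[R]_q) u v : psd_sym M ->
  `|dotv u (M *m v)| <= dotv u (M *m u) + dotv v (M *m v).
Proof.
(* expand 0 <= <u +- v, M (u +- v)> *)
move=> [sM pM]; have := pM (u + v); have := pM (u - v); have := pM u; have := pM v.
rewrite !(mulmxBr, dotvBr, mulmxDr, dotvDl, dotvDr, dotvNl) (dotv_sym_mulmx v u sM).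
by rewrite ler_norml; lra.
Qed.

Lemma posdef_sym_dotv_bounded q (M : 'M[R]_q) (a : 'cV[R]_q) : posdef_sym M ->
  bounded_on (fun v => dotv (M *m v) v <= 1) (dotv a).
Proof.
move=> pdM; have [sM _] := pdM.
have [u aE] : exists u, a = M *m u.
  by exists (invmx M *m a); rewrite mulmxA mulmxV ?posdef_sym_unit // mul1mx.
exists (dotv u (M *m u) + 1) => v /= v_le1; rewrite aE dotv_mulmx_sym //.
rewrite dotv_mulmx_sym // in v_le1.
have := psd_sym_norm_dotv_le u v (posdef_sym_psd pdM); lra.
Qed.

Lemma mp_pinv_unit q (M : 'M[R]_q) : M \in unitmx -> mp_pinv M = invmx M.
Proof.
move=> M_unit; rewrite /mp_pinv.
have := ClassicalEpsilon.epsilon_spec (inhabits 0) (fun X => is_mp_pinv M X).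
set X := ClassicalEpsilon.epsilon _ _ => X_spec.
have /X_spec/and4P[/eqP MXM _ _ _] : exists X, is_mp_pinv M X.
  exists (invmx M); apply/and4P; split; apply/eqP;
    by rewrite ?mulmxV ?mulVmx ?mul1mx ?trmx1.
have : invmx M *m (M *m X *m M) *m invmx M = invmx M *m M *m invmx M by rewrite MXM.
by rewrite !mulmxA mulVmx // mul1mx -mulmxA mulmxV // mulmx1 mul1mx.
Qed.

End QuadraticForms.

Section DescriptorSystem.
Variables (R : realType) (m n p : nat).
Variables (F C : nat -> 'M[R]_(m, n)) (H : nat -> 'M[R]_(p, n))
          (S : nat -> 'M[R]_m) (Rw : nat -> 'M[R]_p) (y : nat -> 'cV[R]_p).
Hypothesis S_posdef : forall k, posdef_sym (S k).
Hypothesis Rw_posdef : forall k, posdef_sym (Rw k).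
Hypothesis rank_FH : forall k, \rank (col_mx (F k) (H k)) = n.

Local Notation Pk := (Pk F C H S Rw y).
Local Notation rk := (rk F C H S Rw y).
Local Notation Bk := (Bk F C H S Rw y).
Local Notation Pkk := (Pkk F C H S Rw y).
Local Notation xhat := (xhat F C H S Rw y).
Local Notation Ak := (Ak F C H S Rw y).
Local Notation cost := (cost F C H S Rw y).
Local Notation Xset := (Xset F C H S Rw y).

Let W j := S j - S j *m C j *m invmx (Bk j) *m (C j)^T *m S j.

Lemma Bk_posdef j : posdef_sym (Pk j) -> posdef_sym (Bk j).
Proof. by move=> pdP; apply: posdef_sym_addr pdP (psd_sym_conj _ (posdef_sym_psd _)). Qed.

Lemma Pk_succ j : posdef_sym (Pk j) ->
  Pk j.+1 = (F j.+1)^T *m W j *m F j.+1 + (H j.+1)^T *m Rw j.+1 *m H j.+1.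
Proof.
move=> pdP; rewrite /Defs.Pk /= mp_pinv_unit; first by rewrite [LHS]addrC.
exact/posdef_sym_unit/Bk_posdef.
Qed.

Lemma rk_succ j : posdef_sym (Pk j) ->
  rk j.+1 = (F j.+1)^T *m S j *m C j *m invmx (Bk j) *m rk j
           + (H j.+1)^T *m Rw j.+1 *m y j.+1.
Proof.
by move=> pdP; rewrite /Defs.rk /= mp_pinv_unit //; exact/posdef_sym_unit/Bk_posdef.
Qed.

Lemma Ak_woodbury j : posdef_sym (Pk j) -> Pkk j = invmx (Pk j) ->
  Ak j = W j.
Proof.
move=> pdP PkkE; have B_unit := posdef_sym_unit (Bk_posdef pdP).
by rewrite /Defs.Ak PkkE woodbury // posdef_sym_unit.
Qed.

Lemma W_posdef j : posdef_sym (Pk j) -> posdef_sym (W j).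
Proof.
move=> pdP; have B_unit := posdef_sym_unit (Bk_posdef pdP).
have S_unit := posdef_sym_unit (S_posdef j); have P_unit := posdef_sym_unit pdP.
rewrite /W -woodbury //.
apply/posdef_sym_inv/posdef_sym_addr; first exact/posdef_sym_inv.
by have := psd_sym_conj (C j)^T (posdef_sym_psd (posdef_sym_inv pdP)); rewrite trmxK.
Qed.

Lemma Pk_Kalman k : [/\ posdef_sym (Pk k), Pkk k = invmx (Pk k)
                      & rk k = Pk k *m xhat k].
Proof.
elim: k => [|j [pdP PkkE rE]].
  have pdP0 : posdef_sym (Pk 0) by exact: posdef_sym_gram_col_mx.
  split=> //; rewrite /Defs.xhat /Defs.rk /=.
  by rewrite !mulmxA mulmxV ?posdef_sym_unit // mul1mx.
have AkE := Ak_woodbury pdP PkkE.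
have pdP' : posdef_sym (Pk j.+1).
  by rewrite Pk_succ //; apply: posdef_sym_gram_col_mx (W_posdef pdP) _.
have PkkE' : Pkk j.+1 = invmx (Pk j.+1) by rewrite Pk_succ // -AkE.
split=> //.
have -> : xhat j.+1 = Pkk j.+1 *m
    ((F j.+1)^T *m Ak j *m C j *m xhat j
     + (H j.+1)^T *m Rw j.+1 *m y j.+1).
  by rewrite mulmxDr !mulmxA.
rewrite PkkE' AkE mulmxA mulmxV ?posdef_sym_unit // mul1mx rk_succ // rE.
congr (_ + _); rewrite -!mulmxA; congr (_ *m _); rewrite !mulmxA.
(* A_j C_j = S_j C_j B_j^{-1} P_j *)
by rewrite /W /Defs.Bk woodbury_mulmx //; exact/posdef_sym_unit/Bk_posdef.
Qed.

Lemma cost_le1_terms tau x : cost tau x <= 1 ->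
  [/\ dotv (S 0%N *m (F 0%N *m x 0%N)) (F 0%N *m x 0%N) <= 1,
      forall i, (1 <= i <= tau)%N ->
        dotv (S i.-1 *m (F i *m x i - C i.-1 *m x i.-1))
             (F i *m x i - C i.-1 *m x i.-1) <= 1 &
      forall i, (i <= tau)%N ->
        dotv (Rw i *m (y i - H i *m x i)) (y i - H i *m x i) <= 1].
Proof.
have term_ge0 q (M : 'M[R]_q) v : posdef_sym M -> 0 <= dotv (M *m v) v.
  by move=> pdM; rewrite dotv_mulmx_sym ?(posdef_sym_psd pdM).2 ?pdM.1.
rewrite /Defs.cost; set f0 := dotv _ _; set sF := \sum_(_ <= _ < _) _.
set sH := \sum_(_ <= _ < _) _ => cost_le1.
have f0_ge0 : 0 <= f0 by exact: term_ge0.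
have sF_ge0 : 0 <= sF by apply: sumr_ge0 => i _; exact: term_ge0.
have sH_ge0 : 0 <= sH by apply: sumr_ge0 => i _; exact: term_ge0.
split=> [|i i_le|i i_le]; first lra.
- have : dotv (S i.-1 *m (F i *m x i - C i.-1 *m x i.-1))
              (F i *m x i - C i.-1 *m x i.-1) <= sF.
    by apply: (ler_sum_nat_term (fun i => _)) => // j; exact: term_ge0.
  lra.
- have : dotv (Rw i *m (y i - H i *m x i)) (y i - H i *m x i) <= sH.
    by apply: (ler_sum_nat_term (fun i => _)) => // j; exact: term_ge0.
  lra.
Qed.

Local Notation feasible k := (fun x => cost k x <= 1).

Lemma initial_part_bounded k (a : 'cV[R]_m) :
  bounded_on (feasible k) (fun x => dotv a (F 0%N *m x 0%N)).
Proof.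
have [M aM] := posdef_sym_dotv_bounded a (S_posdef 0).
by exists M => x /cost_le1_terms[x0_le1 _ _]; exact: aM.
Qed.

Lemma dynamics_part_bounded k j (a : 'cV[R]_m) : (j < k)%N ->
  bounded_on (feasible k) (fun x => dotv a (F j.+1 *m x j.+1 - C j *m x j)).
Proof.
move=> jk; have [M aM] := posdef_sym_dotv_bounded a (S_posdef j).
by exists M => x /cost_le1_terms[_ step_le1 _]; exact: aM (step_le1 j.+1 jk).
Qed.

Lemma measured_part_bounded k j (b : 'cV[R]_p) : (j <= k)%N ->
  bounded_on (feasible k) (fun x => dotv b (H j *m x j)).
Proof.
move=> jk; have [M bM] := posdef_sym_dotv_bounded b (Rw_posdef j).
have noise_bounded : bounded_on (feasible k) (fun x => dotv b (y j - H j *m x j)).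
  by exists M => x /cost_le1_terms[_ _ noise_le1]; exact: bM (noise_le1 j jk).
apply: eq_bounded_on
  (bounded_onD (bounded_on_cst _ (dotv b (y j))) (bounded_onN noise_bounded)).
by move=> x _ /=; rewrite dotvBr subKr.
Qed.

Lemma state_functional_bounded k j (l : 'cV[R]_n) : (j <= k)%N ->
  bounded_on (feasible k) (fun x => dotv l (x j)).
Proof.
elim: j l => [|j IHj] l jk.
  have [a [b ->]] := col_mx_full_rank_span (rank_FH 0) l.
  apply: eq_bounded_on
    (bounded_onD (initial_part_bounded k a) (measured_part_bounded b jk)).
  by move=> x _ /=; rewrite dotvDl -!dotv_trmul.
have [a [b ->]] := col_mx_full_rank_span (rank_FH j.+1) l.
have past_bounded := IHj ((C j)^T *m a) (ltnW jk).
apply: eq_bounded_on (bounded_onD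
  (bounded_onD (dynamics_part_bounded a jk) past_bounded)
  (measured_part_bounded b jk)).
by move=> x _ /=; rewrite dotvDl -!dotv_trmul dotvBr subrK.
Qed.

Lemma Xset_bounded k (l : 'cV[R]_n) : bounded_on (Xset k) (dotv l).
Proof.
have [M lM] := state_functional_bounded l (leqnn k).
by exists M => _ [x [<- cost_le1]]; exact: lM.
Qed.

End DescriptorSystem.

Lemma Lsub_of_bounded (R : realType) (m n p : nat)
    (F C : nat -> 'M[R]_(m, n)) (H : nat -> 'M[R]_(p, n))
    (S : nat -> 'M[R]_m) (Rw : nat -> 'M[R]_p) (y : nat -> 'cV[R]_p) k l :
  (exists z, Xset F C H S Rw y k z) -> bounded_on (Xset F C H S Rw y k) (dotv l) ->
  Lsub F C H S Rw y k l.
Proof.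
move=> [z Xz] [M lM]; rewrite /Lsub /=.
apply: (@le_lt_trans _ _ (M + M)%:E); last exact: ltry.
apply: (le_trans (ereal_inf_lbound _)); first by exists z.
apply: ge_ereal_sup => _ [x Xx <-].
rewrite lee_fin dotvBr (le_trans (ler_normB _ _)) // lerD ?lM //.
Qed.

Lemma setdim_full (R : realType) n (A : set 'cV[R]_n) : (forall v, A v) -> setdim A = n.
Proof.
move=> A_full; apply/eqP; rewrite eqn_leq; apply/andP; split.
  by apply/bigmax_leqP => d _; rewrite -ltnS.
apply: (leq_trans _ (leq_bigmax_cond ord_max _)) => //=.
apply: asboolT; exists 1%:M.
by split=> [i|]; [exact: A_full | rewrite row_free_unit unitmx1].
Qed.

Theorem corollary1 (R : realType) (m n p : nat)
  (F C : nat -> 'M[R]_(m, n)) (H : nat -> 'M[R]_(p, n))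
  (S : nat -> 'M[R]_m) (Rw : nat -> 'M[R]_p) (y : nat -> 'cV[R]_p)
  (hS : forall k, posdef_sym (S k))
  (hR : forall k, posdef_sym (Rw k))
  (hy : exists x : nat -> 'cV[R]_n,
          forall tau, cost F C H S Rw y tau x <= 1)
  (hrank : forall k, \rank (col_mx (F k) (H k)) = n) :
  forall k : nat,
    Inc F C H S Rw y k = 0%N /\
    mp_pinv (Pk F C H S Rw y k) *m rk F C H S Rw y k = xhat F C H S Rw y k.
Proof.
move=> k; split.
  rewrite /Inc setdim_full ?subnn // => l.
  apply: Lsub_of_bounded (Xset_bounded C y hS hR hrank k l).
  by have [x feasible_x] := hy; exists (x k), x.
have [pdP _ ->] := Pk_Kalman C y hS hR hrank k.
have P_unit := posdef_sym_unit pdP.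
by rewrite mp_pinv_unit // mulmxA mulVmx // mul1mx.
Qed.
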